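(* Let $k$ be a positive integer, $V$ a finite-dimensional complex vector space, and $P_1,\dots,P_k$ pairwise commuting operators on $V$ each of order at most $2$ (i.e. $P_i^2=\mathrm{id}$). For $\varepsilon=(\varepsilon_1,\dots,\varepsilon_k)\in\{\pm1\}^k$ let $V_\varepsilon=\prod_{i=1}^k(1+\varepsilon_iP_i)V$. Let $A$ be an operator on $V$ commuting with $P_1,\dots,P_k$, and for $\varepsilon\in\{\pm1\}^k$ let $\mathcal E_{\varepsilon,+}$ (resp. $\mathcal E_{\varepsilon,-}$) be the multiset of positive (resp. negative) characteristic roots of $A|_{V_\varepsilon}:V_\varepsilon\to V_\varepsilon$. If the spectrum of $A$ coincides with the spectrum of $(\prod_{i\in I}P_i)A$ for every nonempty subset $I\subseteq\{1,\dots,k\}$, then $\mathcal E_{\varepsilon,+}=-\mathcal E_{\varepsilon,-}$ for every $\varepsilon\ne(1,1,\dots,1)$, and the spectrum of $A$ contains a sub-multiset of size $\dim V-\dim V_{(1,1,\dots,1)}$ which is symmetric about the origin.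
   Context: The spectrum of an operator is its multiset of characteristic roots (eigenvalues with algebraic multiplicity). A multiset $M$ of complex numbers is symmetric about the origin if $M=-M$. *)

From mathcomp Require Import all_boot all_order all_algebra all_field.
Set Implicit Arguments. Unset Strict Implicit. Unset Printing Implicit Defensive.
Import Order.TTheory GRing.Theory Num.Theory.
Local Open Scope ring_scope.

(* V = 'rV[algC]_n (complex vector space of dimension n); operators are
   matrices acting on row vectors (v |-> v *m A).  algC = algebraic complex
   numbers (algebraically closed, characteristic 0, with the usual
   partial order: 0 < x iff x is a positive real). *)

Definition spec_mult (m : nat) (A : 'M[algC]_m) (x : algC) : nat :=
  mup x (char_poly A).

(* Matrix (w.r.t. the basis row_base W of the row space of W) of the
   restriction of A to the subspace W (meaningful when W is A-stable). *)
Definition restrict_mx (n : nat) (W A : 'M[algC]_n) : 'M[algC]_(\rank W) :=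
  row_base W *m A *m pinvmx (row_base W).

(* The projector prod_i (1 + eps_i P_i); V_eps is its image (row space). *)
Definition proj_eps (n k : nat) (P : 'I_k -> 'M[algC]_n) (eps : 'I_k -> algC)
  : 'M[algC]_n := \prod_(i < k) (1%:M + eps i *: P i).

Definition pos_roots (n : nat) (W A : 'M[algC]_n) (x : algC) : nat :=
  if 0 < x then spec_mult (restrict_mx W A) x else 0%N.
Definition neg_roots (n : nat) (W A : 'M[algC]_n) (x : algC) : nat :=
  if x < 0 then spec_mult (restrict_mx W A) x else 0%N.

From mathcomp Require Import all_boot all_order all_algebra all_field.
Import Order.TTheory GRing.Theory Num.Theory.
Local Open Scope ring_scope.
Set Implicit Arguments. Unset Strict Implicit. Unset Printing Implicit Defensive.

(* The commuting involutions P_i split V into the joint eigenspaces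
   V_eps = proj_eps P eps V (eps in {1,-1}^k, encoded below by boolean vectors
   f with eps_i = sgnb (f i)), each stable under A, and P_i acts on V_eps as
   eps_i.  So (prod_(i in I) P_i) A acts on V_eps as w_I(eps) A, where
   w_I(eps) = prod_(i in I) eps_i is a Walsh character.  Writing m_eps(x) for
   the multiplicity of x in the spectrum of A on V_eps, the hypothesis says
   that sum_eps m_eps(w_I(eps) x) does not depend on I.  Hence
   d(eps) = m_eps(x) - m_eps(-x) satisfies
   sum_eps w_I(eps) d(eps) = sum_eps d(eps) for every I, and orthogonality of
   the Walsh characters forces d(eps) = 0 for eps <> (1,...,1).  The union of
   the spectra of A on the V_eps with eps <> (1,...,1) is then the required
   symmetric sub-multiset. *)

Section RestrictCharPoly.
Variable F : fieldType.

Lemma char_poly_intertwine m p (B : 'M[F]_(m, p)) (M : 'M_p) (D : 'M_m) :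
  row_free B -> row_full B -> B *m M = D *m B -> char_poly M = char_poly D.
Proof.
move=> freeB fullB BM; have mp : m = p by rewrite -(eqP freeB) (eqP fullB).
subst p; have detB : (\det B)%:P != 0.
  by rewrite polyC_eq0 -unitfE -unitmxE -row_free_unit.
have BX : char_poly_mx D *m map_mx polyC B = map_mx polyC B *m char_poly_mx M.
  by rewrite mulmxBl mulmxBr -!map_mxM BM scalar_mxC.
move/(congr1 determinant): BX; rewrite !det_mulmx det_map_mx mulrC.
by move/(mulfI detB).
Qed.

Lemma char_poly_restrict_full n (S A : 'M[F]_n) :
  row_full S -> stablemx S A -> char_poly (restrictmx S A) = char_poly A.
Proof.
move=> fullS SA; symmetry; apply: (@char_poly_intertwine _ _ (row_base S)).
- exact: row_base_free.
- by rewrite /row_full (eq_row_base S).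
- by rewrite /conjmx mulmxKpV ?stablemx_row_base.
Qed.

Lemma char_poly_restrict_adds m1 m2 n (U1 : 'M[F]_(m1, n)) (U2 : 'M_(m2, n)) A :
  stablemx U1 A -> stablemx U2 A -> (U1 :&: U2 = 0)%MS ->
  char_poly (restrictmx (U1 + U2)%MS A)
    = char_poly (restrictmx U1 A) * char_poly (restrictmx U2 A).
Proof.
(* Expressed in the basis [W] of U1 + U2, the concatenated bases [C] of U1 and
   U2 form an invertible change of basis to the block-diagonal matrix. *)
move=> U1A U2A capU; set W := row_base (U1 + U2)%MS.
set C := col_mx (row_base U1) (row_base U2).
have CW : (C <= W)%MS.
  by rewrite eq_row_base col_mx_sub !eq_row_base addsmxSl addsmxSr.
have rankC : \rank (C *m pinvmx W) = \rank (U1 + U2)%MS.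
  have rank_col : \rank C = \rank (U1 + U2)%MS.
    by rewrite -addsmxE (adds_eqmx (eq_row_base U1) (eq_row_base U2)).
  apply/eqP; rewrite eqn_leq rank_leq_col /=.
  by rewrite -{1}rank_col -{1}(mulmxKpV CW) mxrankM_maxl.
have -> : char_poly (restrictmx U1 A) * char_poly (restrictmx U2 A)
          = char_poly (block_mx (restrictmx U1 A) 0 0 (restrictmx U2 A)).
  by rewrite /char_poly char_block_diag_mx det_ublock.
apply: (@char_poly_intertwine _ _ (C *m pinvmx W)).
- by rewrite /row_free rankC mxrank_disjoint_sum.
- by rewrite /row_full rankC.
rewrite [conjmx W A]/conjmx 2!mulmxA (mulmxKpV CW) mulmxA; congr (_ *m _).
rewrite /C mul_col_mx mul_block_col !mul0mx addr0 add0r /conjmx.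
by rewrite !mulmxKpV ?stablemx_row_base.
Qed.

End RestrictCharPoly.

Lemma restrictmx_row_eigenM (F : fieldType) n (W B A : 'M[F]_n) c :
  W *m B = c *: W -> restrictmx W (B *m A) = c *: restrictmx W A.
Proof.
move=> WB; have /submxP[D defW] : (row_base W <= W)%MS by rewrite eq_row_base.
by rewrite /conjmx mulmxA {1}defW -(mulmxA D) WB -scalemxAr -defW !scalemxAl.
Qed.

Lemma row_eigen_mulmx_prod (R : comPzRingType) n (J : Type) (X : 'M[R]_n)
    (r : seq J) (P : pred J) (G : J -> 'M_n) (t : J -> R) :
    (forall j, X *m G j = t j *: X) ->
  X *m \prod_(j <- r | P j) G j = (\prod_(j <- r | P j) t j) *: X.
Proof.
move=> XG; apply: (big_rec2 (fun a Y => X *m Y = a *: X)) => [|j a Y _ XY].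
  by rewrite mulmx1 scale1r.
by rewrite mulmxA XG -scalemxAl XY scalerA.
Qed.

Lemma prod_mulmx_eigen_factor (R : comPzRingType) n (J : eqType) (r : seq J)
    (G : J -> 'M[R]_n) (X : 'M_n) j0 t :
    j0 \in r -> (forall j, X *m G j = G j *m X) -> G j0 *m X = t *: G j0 ->
  (\prod_(j <- r) G j) *m X = t *: \prod_(j <- r) G j.
Proof.
move=> + XG Gj0; elim: r => // j r IHr; rewrite inE big_cons.
have [<- _|_ /= j0_r] := eqVneq j0 j.
  have XGr : X *m \prod_(j <- r) G j = (\prod_(j <- r) G j) *m X.
    by apply: commr_prod => i _; apply: XG.
  by rewrite -mulmxA -XGr mulmxA Gj0 -scalemxAl.
by rewrite -mulmxA IHr // scalemxAr.
Qed.

Section OrthogonalSums.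
Variables (F : fieldType) (n : nat) (I : eqType) (E : I -> 'M[F]_n) (c : F).
Hypothesis c_neq0 : c != 0.
Hypothesis E_orth : forall i j, i != j -> E i *m E j = 0.
Hypothesis E_sq : forall i, E i *m E i = c *: E i.

Lemma capmx_orth_sums i s : i \notin s -> (E i :&: \sum_(j <- s) E j)%MS = 0.
Proof.
move=> i_s; set C := (E i :&: _)%MS.
have CE : C *m E i = 0.
  apply/sub_kermxP/(submx_trans (capmxSr _ _)).
  rewrite big_seq; apply: (big_ind (fun X : 'M_n => X <= kermx (E i))%MS).
  - exact: sub0mx.
  - by move=> X Y X0 Y0; rewrite addsmx_sub X0 Y0.
  - by move=> j j_s; apply/sub_kermxP/E_orth; apply: contraNneq i_s => <-.
have /submxP[D defC] : (C <= E i)%MS := capmxSl _ _.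
have : c *: C = 0 by rewrite defC scalemxAr -E_sq mulmxA -defC CE.
by move/eqP; rewrite scalemx_eq0 (negPf c_neq0) => /eqP.
Qed.

Lemma mxrank_orth_sums s : uniq s ->
  \rank (\sum_(i <- s) E i)%MS = (\sum_(i <- s) \rank (E i))%N.
Proof.
elim: s => [|i s IHs /= /andP[i_s s_uniq]]; first by rewrite !big_nil mxrank0.
by rewrite !big_cons mxrank_disjoint_sum ?IHs ?capmx_orth_sums.
Qed.

Lemma char_poly_restrict_orth_sums A s :
    (forall i, stablemx (E i) A) -> uniq s ->
  char_poly (restrictmx (\sum_(i <- s) E i)%MS A)
    = \prod_(i <- s) char_poly (restrictmx (E i) A).
Proof.
move=> EA; elim: s => [_|i s IHs /= /andP[i_s s_uniq]].
  by rewrite !big_nil; move: (restrictmx _ _); rewrite mxrank0 => M; apply: det_mx00.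
rewrite !big_cons char_poly_restrict_adds ?IHs ?capmx_orth_sums //.
apply: (big_ind (fun X : 'M_n => stablemx X A)) => [|X Y|j _].
- exact: stable0mx.
- exact: stableDmx.
- exact: EA.
Qed.

End OrthogonalSums.

Lemma char_polyN (R : comNzRingType) m (M : 'M[R]_m) :
  char_poly (- M) = (-1) ^+ m * (char_poly M \Po - 'X).
Proof.
rewrite /char_poly -det_map_mx -mulN1r -detZ; congr (\det _).
apply/matrixP => i j; rewrite !mxE rmorphB /= rmorphMn /= comp_polyX comp_polyC.
by rewrite mulr1 mulN1r polyCN mulNrn opprD !opprK.
Qed.

Lemma char_poly_XsubC (F : closedFieldType) m (M : 'M[F]_m) :
  {s : seq F | size s = m & char_poly M = \prod_(z <- s) ('X - z%:P)}.
Proof.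
have [s cpM] := closed_field_poly_normal (char_poly M).
rewrite (monicP (char_poly_monic M)) scale1r in cpM.
by exists s => //; have := size_char_poly M; rewrite cpM size_prod_XsubC => -[].
Qed.

Lemma mup_char_polyN (F : closedFieldType) m (M : 'M[F]_m) x :
  mup x (char_poly (- M)) = mup (- x) (char_poly M).
Proof.
have [s size_s cpM] := char_poly_XsubC M.
have cpNM : char_poly (- M) = \prod_(z <- map -%R s) ('X - z%:P).
  rewrite char_polyN cpM rmorph_prod big_map.
  under eq_bigr do rewrite rmorphB /= comp_polyX comp_polyC -opprD -mulN1r.
  rewrite big_split /= big_const_seq count_predT size_s iter_mulr_1.
  rewrite mulrA -exprMn mulrNN mulr1 expr1n mul1r.
  by apply: eq_bigr => z _; rewrite polyCN opprK.
rewrite cpNM cpM !mu_prod_XsubC count_map; apply: eq_count => z /=.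
by rewrite eqr_oppLR.
Qed.

Lemma mup_prod (F : fieldType) (I : Type) (r : seq I) (p : I -> {poly F}) x :
  (forall i, p i != 0) -> mup x (\prod_(i <- r) p i) = (\sum_(i <- r) mup x (p i))%N.
Proof.
move=> p_neq0; elim: r => [|i r IHr]; first by rewrite !big_nil mupNroot ?root1.
rewrite !big_cons mupM ?IHr //.
apply: (big_ind (fun q : {poly F} => q != 0)) => [|q1 q2|j _]; last exact: p_neq0.
  exact: oner_neq0.
exact: mulf_neq0.
Qed.

Definition sgnb {R : pzRingType} (b : bool) : R := if b then 1 else -1.

Lemma sgnbM (R : pzRingType) (a b : bool) : sgnb a * sgnb b = sgnb (a == b) :> R.
Proof. by case: a; case: b; rewrite /sgnb ?mulr1 ?mul1r ?mulrNN ?mulr1. Qed.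

Definition walsh {R : pzRingType} {T : finType}
    (A : {set T}) (f : {ffun T -> bool}) : R :=
  \prod_(i in A) sgnb (f i).

Section Walsh.
Variable T : finType.
Implicit Types (A : {set T}) (f g : {ffun T -> bool}).
Local Notation ftrue := [ffun => true].

Lemma sum_prod_subsets (R : comPzSemiRingType) (a : T -> R) :
  \sum_(A : {set T}) \prod_(i in A) a i = \prod_i (1 + a i).
Proof.
rewrite (eq_bigr (fun i => \sum_(b : bool) (if b then a i else 1))); last first.
  by move=> i _; rewrite big_bool addrC.
rewrite bigA_distr_bigA /= (reindex (fun f : {ffun T -> bool} => [set i | f i])) /=.
  by apply: eq_bigr => f _; rewrite big_mkcond; apply: eq_bigr => i _; rewrite inE.
exists (fun A : {set T} => [ffun i => i \in A]) => [f _|A _].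
  by apply/ffunP => i; rewrite ffunE inE.
by apply/setP => i; rewrite inE ffunE.
Qed.

Lemma prod_1D_sgnb (R : comPzRingType) f :
  \prod_i (1 + sgnb (f i)) = (f == ftrue)%:R * 2 ^+ #|T| :> R.
Proof.
have [->|] := eqVneq f ftrue.
  by rewrite mul1r -prodr_const; apply: eq_bigr => i _; rewrite ffunE.
case: (pickP (fun i => ~~ f i)) => [i fi _ | ftrue_f]; last first.
  by case/eqP; apply/ffunP => i; rewrite ffunE; move/negbFE: (ftrue_f i).
by rewrite (bigD1 i) //= (negbTE fi) /sgnb subrr mul0r mul0r.
Qed.

Lemma ffun_eqb_true f g : ([ffun i => f i == g i] == ftrue) = (f == g).
Proof.
apply/eqP/eqP => [fg|->]; apply/ffunP => i; last by rewrite !ffunE eqxx.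
by apply/eqP; move/ffunP/(_ i): fg; rewrite !ffunE.
Qed.

Lemma walsh_sgnb (R : pzRingType) A f : exists b, walsh A f = sgnb b :> R.
Proof.
apply: (big_ind (fun x : R => exists b, x = sgnb b)) => [|x y [a ->] [b ->]|i _].
- by exists true.
- by exists (a == b); rewrite sgnbM.
- by exists (f i).
Qed.

Lemma sum_walsh (R : comPzRingType) f :
  \sum_A walsh A f = (f == ftrue)%:R * 2 ^+ #|T| :> R.
Proof. by rewrite sum_prod_subsets prod_1D_sgnb. Qed.

Lemma sum_walshM (R : comPzRingType) f g :
  \sum_A walsh A f * walsh A g = (f == g)%:R * 2 ^+ #|T| :> R.
Proof.
rewrite -ffun_eqb_true -prod_1D_sgnb -sum_prod_subsets; apply: eq_bigr => A _.
by rewrite /walsh -big_split; apply: eq_bigr => i _; rewrite ffunE; apply: sgnbM.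
Qed.

Lemma walsh_coeffs_eq (R : numDomainType) (g : {ffun T -> bool} -> R) :
    (forall A, \sum_f walsh A f * g f = \sum_f g f) ->
  forall f, f != ftrue -> g f = 0.
Proof.
move=> gA f0 f0_neq.
have coeff f :
    \sum_A walsh A f0 * (walsh A f * g f) = (f0 == f)%:R * 2 ^+ #|T| * g f.
  by rewrite -sum_walshM mulr_suml; apply: eq_bigr => A _; rewrite mulrA.
have : \sum_A walsh A f0 * \sum_f walsh A f * g f = \sum_A walsh A f0 * \sum_f g f.
  by apply: eq_bigr => A _; rewrite gA.
rewrite -mulr_suml sum_walsh (negPf f0_neq) !mul0r.
under eq_bigr do rewrite mulr_sumr.
rewrite exchange_big (eq_bigr _ (fun f _ => coeff f)) (bigD1 f0) //= big1 => [|f].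
  rewrite eqxx mul1r addr0 => /eqP.
  by rewrite mulf_eq0 expf_eq0 pnatr_eq0 andbF => /eqP.
by rewrite eq_sym => /negPf ->; rewrite !mul0r.
Qed.

End Walsh.

Lemma restrict_mxE n (W A : 'M[algC]_n) : restrict_mx W A = restrictmx W A.
Proof. by []. Qed.

Lemma spectrum_seq m (M : 'M[algC]_m) :
  {s : seq algC | size s = m & forall x, spec_mult M x = count_mem x s}.
Proof.
have [s size_s cpM] := char_poly_XsubC M.
by exists s => // x; rewrite /spec_mult cpM mu_prod_XsubC.
Qed.

Lemma spec_mult_sgnbZ m (M : 'M[algC]_m) b x :
  spec_mult (sgnb b *: M) x = spec_mult M (sgnb b * x).
Proof.
by case: b; rewrite /sgnb ?scale1r ?mul1r // scaleN1r mulN1r /spec_mult mup_char_polyN.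
Qed.

Section SignProjectors.
Variables (k n : nat) (P : 'I_k -> 'M[algC]_n).
Hypothesis P_comm : forall i j, P i *m P j = P j *m P i.
Hypothesis P_invol : forall i, P i *m P i = 1%:M.
Implicit Types (f g : {ffun 'I_k -> bool}) (B : 'M[algC]_n).

Let two_k_neq0 : (2 ^+ k : algC) != 0.
Proof. by rewrite expf_neq0 // pnatr_eq0. Qed.

Definition proj_sgn f : 'M[algC]_n := proj_eps P (fun i => sgnb (f i)).

Lemma proj_sgnP f i : proj_sgn f *m P i = sgnb (f i) *: proj_sgn f.
Proof.
apply: prod_mulmx_eigen_factor (mem_index_enum i) _ _ => [j|].
  by rewrite mulmxDr mulmxDl mulmx1 mul1mx -scalemxAr -scalemxAl P_comm.
rewrite mulmxDl mul1mx -scalemxAl P_invol scalerDr scalerA sgnbM eqxx scale1r.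
by rewrite addrC.
Qed.

Lemma proj_sgn_prodP f (I : {set 'I_k}) :
  proj_sgn f *m \prod_(i in I) P i = walsh I f *: proj_sgn f.
Proof. exact: row_eigen_mulmx_prod (proj_sgnP f). Qed.

Lemma proj_sgnM f g :
  proj_sgn f *m proj_sgn g = ((f == g)%:R * 2 ^+ k) *: proj_sgn f.
Proof.
have row_eigen j : proj_sgn f *m (1%:M + sgnb (g j) *: P j)
                   = (1 + sgnb ([ffun i => g i == f i] j)) *: proj_sgn f.
  rewrite mulmxDr mulmx1 -scalemxAr proj_sgnP scalerA ffunE sgnbM.
  by rewrite scalerDl scale1r.
rewrite [proj_sgn g]/proj_sgn /proj_eps (row_eigen_mulmx_prod _ _ row_eigen).
by rewrite prod_1D_sgnb ffun_eqb_true eq_sym card_ord.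
Qed.

Lemma proj_sgn_orth f g : f != g -> proj_sgn f *m proj_sgn g = 0.
Proof. by move=> fg; rewrite proj_sgnM (negPf fg) mul0r scale0r. Qed.

Lemma proj_sgn_sq f : proj_sgn f *m proj_sgn f = 2 ^+ k *: proj_sgn f.
Proof. by rewrite proj_sgnM eqxx mul1r. Qed.

Lemma sum_proj_sgn : \sum_f proj_sgn f = (2 ^+ k)%:M.
Proof.
rewrite /proj_sgn /proj_eps.
rewrite -(@bigA_distr_bigA _ 0 1 *%R +%R _ _ (fun i b => 1%:M + sgnb b *: P i)) /=.
rewrite (eq_bigr (fun=> 2%:M)) => [|i _]; last first.
  by rewrite big_bool /= scale1r scaleN1r addrACA subrr addr0 -raddfD.
by rewrite -(big_morph _ (@scalar_mxM _ n) (erefl _)) prodr_const card_ord.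
Qed.

Lemma row_full_sums_proj_sgn : row_full (\sum_f proj_sgn f)%MS.
Proof.
rewrite -sub1mx; have -> : 1%:M = (2 ^+ k)^-1 *: \sum_f proj_sgn f.
  by rewrite sum_proj_sgn scale_scalar_mx mulVf.
by apply/scalemx_sub/summx_sub => f _; apply: (sumsmx_sup f).
Qed.

Lemma stablemx_proj_sgn B f :
  (forall i, B *m P i = P i *m B) -> stablemx (proj_sgn f) B.
Proof.
move=> BP; apply/comm_mx_stable/esym/commr_prod => i _.
by rewrite /GRing.comm -!mulmxE mulmxDr mulmxDl mulmx1 mul1mx -scalemxAr -scalemxAl BP.
Qed.

Lemma sum_mxrank_proj_sgn : (\sum_f \rank (proj_sgn f))%N = n.
Proof.
rewrite -(mxrank_orth_sums two_k_neq0 proj_sgn_orth proj_sgn_sq) ?index_enum_uniq //.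
exact/eqP/row_full_sums_proj_sgn.
Qed.

Lemma char_poly_proj_sgn B : (forall i, B *m P i = P i *m B) ->
  char_poly B = \prod_f char_poly (restrict_mx (proj_sgn f) B).
Proof.
move=> BP; have BE f := stablemx_proj_sgn f BP.
rewrite -(char_poly_restrict_full row_full_sums_proj_sgn (stablemx_sums BE)).
apply: (char_poly_restrict_orth_sums two_k_neq0 proj_sgn_orth proj_sgn_sq) => //.
exact: index_enum_uniq.
Qed.

Lemma spec_mult_proj_sgn B x : (forall i, B *m P i = P i *m B) ->
  spec_mult B x = (\sum_f spec_mult (restrict_mx (proj_sgn f) B) x)%N.
Proof.
move=> BP; rewrite /spec_mult (char_poly_proj_sgn BP) mup_prod // => f.
exact/monic_neq0/char_poly_monic.
Qed.

End SignProjectors.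

Section SpectralSymmetry.
Variables (k n : nat) (P : 'I_k -> 'M[algC]_n) (A : 'M[algC]_n).
Hypothesis P_comm : forall i j, P i *m P j = P j *m P i.
Hypothesis P_invol : forall i, P i *m P i = 1%:M.
Hypothesis A_comm : forall i, A *m P i = P i *m A.
Hypothesis A_spec : forall I : {set 'I_k}, I != set0 ->
  forall x, spec_mult A x = spec_mult ((\prod_(i in I) P i) *m A) x.
Local Notation ftrue := [ffun => true].
Local Notation spec_on f := (spec_mult (restrict_mx (proj_sgn P f) A)).

Lemma spec_mult_prodP_mul (I : {set 'I_k}) x :
  spec_mult ((\prod_(i in I) P i) *m A) x = (\sum_f spec_on f (walsh I f * x)%R)%N.
Proof.
rewrite (spec_mult_proj_sgn P_comm P_invol) => [|j]; last first.
  rewrite -mulmxA A_comm !mulmxA; congr (_ *m _).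
  by apply/esym/commr_prod => i _; apply: P_comm.
apply: eq_bigr => f _.
rewrite restrict_mxE (restrictmx_row_eigenM _ (proj_sgn_prodP P_comm P_invol f I)).
by have [b ->] := walsh_sgnb algC I f; apply: spec_mult_sgnbZ.
Qed.

Lemma spec_mult_restrict_sym f x : f != ftrue -> spec_on f x = spec_on f (- x).
Proof.
move=> f_neq; pose d f := (spec_on f x)%:R - (spec_on f (- x))%:R : algC.
suff : d f = 0 by move/eqP; rewrite subr_eq0 eqr_nat => /eqP.
(* The Walsh coefficients of [d] are spec(Q_I)(x) - spec(Q_I)(-x) with
   Q_I = (prod_(i in I) P i) A, and [A_spec] makes them independent of [I]. *)
apply: walsh_coeffs_eq f_neq => I.
have walsh_d f' : walsh I f' * d f'
    = (spec_on f' (walsh I f' * x))%:R - (spec_on f' (walsh I f' * - x))%:R.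
  have [[] ->] := walsh_sgnb algC I f'; rewrite /sgnb /d; first by rewrite !mul1r.
  by rewrite !mulN1r opprK opprB.
have spec_I y : spec_mult A y = spec_mult ((\prod_(i in I) P i) *m A) y.
  by have [->|/A_spec] := eqVneq I set0; [rewrite big_set0 mul1mx | apply].
rewrite (eq_bigr _ (fun f' _ => walsh_d f')) !sumrB -!natr_sum.
rewrite -(spec_mult_prodP_mul I x) -(spec_mult_prodP_mul I (- x)) -!spec_I.
by rewrite !(spec_mult_proj_sgn P_comm P_invol _ A_comm).
Qed.

Lemma pos_roots_neg_roots (eps : 'I_k -> algC) :
    (forall i, eps i = 1 \/ eps i = -1) -> (exists i, eps i != 1) ->
  forall x, pos_roots (proj_eps P eps) A x = neg_roots (proj_eps P eps) A (- x).
Proof.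
move=> eps_pm [j eps_j] x; pose f := [ffun i => eps i == 1].
have -> : proj_eps P eps = proj_sgn P f.
  apply: eq_bigr => i _; rewrite ffunE /sgnb.
  by case: (eps_pm i) => ->; case: eqP => // ->.
have f_neq : f != ftrue by apply: contraNneq eps_j => /ffunP/(_ j); rewrite !ffunE.
rewrite /pos_roots /neg_roots oppr_lt0; case: ifP => // _.
exact: spec_mult_restrict_sym.
Qed.

Lemma symmetric_subspectrum : exists M : seq algC,
  [/\ size M = (n - \rank (proj_eps P (fun _ => 1%R : algC)))%N,
      forall x, (count_mem x M <= spec_mult A x)%N &
      perm_eq M (map -%R M)].
Proof.
have [s size_s spec_s] :=
  all_sig2 (fun f => spectrum_seq (restrict_mx (proj_sgn P f) A)).
have -> : proj_eps P (fun _ => 1) = proj_sgn P ftrue.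
  by apply: eq_bigr => i _; rewrite ffunE.
have sum_image (h : {ffun 'I_k -> bool} -> nat) :
    sumn [seq h f | f in predC1 ftrue] = (\sum_(f | f != ftrue) h f)%N.
  by rewrite sumnE big_image.
set M := flatten [seq s f | f in predC1 ftrue].
have count_M x : count_mem x M = (\sum_(f | f != ftrue) spec_on f x)%N.
  rewrite count_flatten -map_comp sum_image.
  by apply: eq_bigr => f _; rewrite spec_s.
exists M; split.
- rewrite size_flatten /shape -map_comp sum_image.
  rewrite -[X in (_ = X - _)%N](sum_mxrank_proj_sgn P_comm P_invol).
  by rewrite [in RHS](bigD1 ftrue) //= addKn; apply: eq_bigr => f _; rewrite size_s.
- move=> x; rewrite count_M (spec_mult_proj_sgn P_comm P_invol _ A_comm).
  rewrite [X in (_ <= X)%N](bigD1 ftrue) //=.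
  exact: leq_addl.
- apply/allP => x _; apply/eqP.
  rewrite count_map [in RHS](eq_count (a2 := pred1 (- x))) => [|z /=]; last first.
    by rewrite eqr_oppLR.
  by rewrite !count_M; apply: eq_bigr => f; apply: spec_mult_restrict_sym.
Qed.

End SpectralSymmetry.

Theorem proposition4p6 (k n : nat) (P : 'I_k -> 'M[algC]_n) (A : 'M[algC]_n) :
  (0 < k)%N ->
  (forall i j, P i *m P j = P j *m P i) ->
  (forall i, P i *m P i = 1%:M) ->
  (forall i, A *m P i = P i *m A) ->
  (forall I : {set 'I_k}, I != set0 ->
     forall x, spec_mult A x = spec_mult ((\prod_(i in I) P i) *m A) x) ->
  (forall eps : 'I_k -> algC, (forall i, eps i = 1 \/ eps i = -1) ->
     (exists i, eps i != 1) ->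
     forall x, pos_roots (proj_eps P eps) A x
               = neg_roots (proj_eps P eps) A (- x)) /\
  (exists M : seq algC,
     [/\ size M = (n - \rank (proj_eps P (fun _ => 1%R : algC)))%N,
         forall x, (count_mem x M <= spec_mult A x)%N &
         perm_eq M (map -%R M)]).
Proof.
move=> _ P_comm P_invol A_comm A_spec; split.
  exact: pos_roots_neg_roots A_spec.
exact: symmetric_subspectrum A_spec.
Qed.
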